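(* Let $H$ be a separable complex Hilbert space, $\{v_j\}_{j\in\mathbb N}$ an orthonormal basis of $H$, $\{w_j\}_{j\in\mathbb N}$ a set of unit vectors in $H$, and $N\ge1$. Let $\mathcal B_N=\{w_j\}_{1\le j\le N}\cup\{v_j\}_{j\ge N+1}$, $\hat H_N=\operatorname{span}\{v_1,\dots,v_N,w_1,\dots,w_N\}$ and $S_H=\{f\in H:\|f\|=1\}$. Then $\mathcal B_N$ is a frame of $H$ if and only if for every $f\in S_H\cap\hat H_N$, $$\sum_{j=1}^N\big(|\langle f,w_j\rangle|^2-|\langle f,v_j\rangle|^2\big)+1>0.$$ Moreover, the optimal frame bounds of $\mathcal B_N$ are the maximum and minimum of the functional $f\mapsto\sum_{j=1}^N(|\langle f,w_j\rangle|^2-|\langle f,v_j\rangle|^2)+1$ on $S_H\cap\hat H_N$.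
   Context: A sequence $\{u_j\}$ in $H$ is a frame if there are constants $0<A\le B<\infty$ with $A\|f\|^2\le\sum_j|\langle f,u_j\rangle|^2\le B\|f\|^2$ for all $f\in H$; the optimal frame bounds are the largest such $A$ and smallest such $B$. *)

From HB Require Import structures.
From mathcomp Require Import all_boot all_order all_algebra.
From mathcomp Require Import all_classical all_reals all_analysis.
From mathcomp Require complex.
Import complex.ComplexField.
Set Implicit Arguments. Unset Strict Implicit. Unset Printing Implicit Defensive.
Import Order.TTheory GRing.Theory Num.Theory.
Local Open Scope ring_scope.

Notation CC R := (complex.complex R).

Section Hilbert.
Variable R : realType.

Definition cconj (z : CC R) : CC R := complex.Complex (complex.Re z) (- complex.Im z).

Definition csqabs (z : CC R) : R := complex.Re z ^+ 2 + complex.Im z ^+ 2.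

Variable H : lmodType (CC R).
Variable ip : H -> H -> CC R.  (* inner product <f,g>, linear in f *)

Definition is_inner_product : Prop :=
  [/\ (forall (a : CC R) (x y z : H), ip (a *: x + y) z = a * ip x z + ip y z),
      (forall x y : H, ip y x = cconj (ip x y)),
      (forall x : H, 0 <= complex.Re (ip x x)) &
      (forall x : H, ip x x = 0 -> x = 0)].

Definition hnorm (x : H) : R := Num.sqrt (complex.Re (ip x x)).

Definition is_complete : Prop :=
  forall u : nat -> H,
    (forall e : R, 0 < e -> exists M : nat, forall m n : nat,
        (M <= m)%N -> (M <= n)%N -> hnorm (u m - u n) < e) ->
    exists l : H, forall e : R, 0 < e -> exists M : nat, forall n : nat,
        (M <= n)%N -> hnorm (u n - l) < e.

Definition is_hilbert : Prop := is_inner_product /\ is_complete.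

Definition is_ONB (v : nat -> H) : Prop :=
  (forall i j : nat, ip (v i) (v j) = (i == j)%:R) /\
  (forall f : H, (forall j, ip f (v j) = 0) -> f = 0).

Definition frame_sum (u : nat -> H) (f : H) : \bar R :=
  (\sum_(0 <= j <oo) (csqabs (ip f (u j)))%:E)%E.

Definition lower_frame_bound (u : nat -> H) (A : R) : Prop :=
  forall f : H, ((A * hnorm f ^+ 2)%:E <= frame_sum u f)%E.

Definition upper_frame_bound (u : nat -> H) (B : R) : Prop :=
  forall f : H, (frame_sum u f <= (B * hnorm f ^+ 2)%:E)%E.

Definition is_frame (u : nat -> H) : Prop :=
  exists A B : R, [/\ 0 < A, A <= B, lower_frame_bound u A & upper_frame_bound u B].

Definition optimal_lower_bound (u : nat -> H) (A : R) : Prop :=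
  lower_frame_bound u A /\ forall A', lower_frame_bound u A' -> A' <= A.

Definition optimal_upper_bound (u : nat -> H) (B : R) : Prop :=
  upper_frame_bound u B /\ forall B', upper_frame_bound u B' -> B <= B'.

(* B_N = {w_j}_{j<N} ∪ {v_j}_{j>=N}  (0-based indexing) *)
Definition BN (N : nat) (v w : nat -> H) : nat -> H :=
  fun j => if (j < N)%N then w j else v j.

Definition in_HN (N : nat) (v w : nat -> H) (f : H) : Prop :=
  exists a b : nat -> CC R,
    f = \sum_(j < N) (a j *: v j + b j *: w j).

Definition in_SH_HN (N : nat) (v w : nat -> H) (f : H) : Prop :=
  hnorm f = 1 /\ in_HN N v w f.

Definition Phi (N : nat) (v w : nat -> H) (f : H) : R :=
  \sum_(j < N) (csqabs (ip f (w j)) - csqabs (ip f (v j))) + 1.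

End Hilbert.

From HB Require Import structures.
From mathcomp Require Import all_boot all_order all_algebra.
From mathcomp Require Import all_classical all_reals all_analysis.
From mathcomp Require complex.
Import complex.ComplexField.
From mathcomp Require Import complex ring lra.
Import Order.TTheory GRing.Theory Num.Theory.
Import numFieldNormedType.Exports.
Local Open Scope ring_scope.

(* By Parseval's identity for (v_j), the frame sum of B_N at f is ||f||^2 + E f, where
   E f = sum_(j < N) (|<f, w_j>|^2 - |<f, v_j>|^2) = Phi f - 1 ([excess] below).  This quadratic
   form only sees the orthogonal projection of f onto the finite-dimensional space H_N, so the
   frame sum lies between (min Phi) ||f||^2 and (max Phi) ||f||^2, the extrema being taken over
   the compact unit sphere of H_N, provided min Phi <= 1 <= max Phi.  The latter is a trace
   argument: for an orthonormal basis (e_i) of H_N,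
   sum_i E e_i = sum_j (||w_j||^2 - ||v_j||^2) = 0.
   Both bounds are attained at the extremal unit vectors, hence optimal. *)

Section ComplexSquaredModulus.
Variable R : realType.
Implicit Types z : CC R.
Local Open Scope complex_scope.

Lemma cconjE z : cconj z = z^*.
Proof. by case: z. Qed.

Lemma csqabsE z : (csqabs z)%:C = z * z^*.
Proof. by rewrite add_Re2_Im2 sqr_normc. Qed.

Lemma csqabs_ge0 z : 0 <= csqabs z.
Proof. by rewrite addr_ge0 ?sqr_ge0. Qed.

Lemma csqabs_conjc z : csqabs z^* = csqabs z.
Proof. by case: z => a b; rewrite /csqabs /= sqrrN. Qed.

Lemma csqabs_eq0 z : csqabs z = 0 -> z = 0.
Proof.
case: z => a b; rewrite /csqabs /= => /eqP; rewrite paddr_eq0 ?sqr_ge0 // !sqrf_eq0.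
by case/andP => /eqP-> /eqP->.
Qed.

Lemma csqabsZ (a : R) z : csqabs (a%:C * z) = a ^+ 2 * csqabs z.
Proof. by case: z => x y; rewrite /csqabs /=; ring. Qed.

End ComplexSquaredModulus.

Lemma sumr_eq0_exists_le0 {R : realFieldType} {I : finType} {P : pred I} {a : I -> R} :
  \sum_(i | P i) a i = 0 -> (exists i, P i) -> exists2 i, P i & a i <= 0.
Proof.
move=> sum0 [i0 Pi0].
have [/existsP[i /andP[]]|/existsPn a_gt0] := boolP [exists i, P i && (a i <= 0)].
  by exists i.
have a_pos i : P i -> 0 < a i by move=> Pi; move: (a_gt0 i); rewrite Pi /= -ltNge.
have : 0 <= \sum_(i | P i && (i != i0)) a i by apply: sumr_ge0 => i /andP[/a_pos/ltW].
by move: sum0; rewrite (bigD1 i0) //=; have := a_pos i0 Pi0; lra.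
Qed.

Lemma sumr_eq0_exists_ge0 {R : realFieldType} {I : finType} {P : pred I} {a : I -> R} :
  \sum_(i | P i) a i = 0 -> (exists i, P i) -> exists2 i, P i & 0 <= a i.
Proof.
move=> sum0 P_nonempty.
have [|i Pi] := @sumr_eq0_exists_le0 _ _ P (fun i => - a i) _ P_nonempty.
  by rewrite sumrN sum0 oppr0.
by rewrite oppr_le0; exists i.
Qed.

Section InnerProduct.
Context {R : realType} {H : lmodType (CC R)}.
Variable ip : H -> H -> CC R.
Hypothesis ip_inner : is_inner_product ip.
Implicit Types (x y z f g : H) (a : CC R).
Local Open Scope complex_scope.

Lemma ipDl x y z : ip (x + y) z = ip x z + ip y z.
Proof. by case: ip_inner => ipl _ _ _; rewrite -[x in LHS]scale1r ipl mul1r. Qed.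

Lemma ip0l z : ip 0 z = 0.
Proof. by apply: (addrI (ip 0 z)); rewrite -ipDl !addr0. Qed.

Lemma ipZl a x z : ip (a *: x) z = a * ip x z.
Proof. by case: ip_inner => ipl _ _ _; rewrite -[_ *: _]addr0 ipl ip0l addr0. Qed.

Lemma ipC x y : ip y x = (ip x y)^*.
Proof. by case: ip_inner => _ ipJ _ _; rewrite ipJ cconjE. Qed.

Lemma ipNl x z : ip (- x) z = - ip x z.
Proof. by rewrite -scaleN1r ipZl mulN1r. Qed.

Lemma ipBl x y z : ip (x - y) z = ip x z - ip y z.
Proof. by rewrite ipDl ipNl. Qed.

Lemma ipDr x y z : ip z (x + y) = ip z x + ip z y.
Proof. by rewrite ipC ipDl rmorphD /= -!ipC. Qed.

Lemma ipZr a x z : ip z (a *: x) = a^* * ip z x.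
Proof. by rewrite ipC ipZl rmorphM /= -ipC. Qed.

Lemma ip0r z : ip z 0 = 0.
Proof. by rewrite ipC ip0l rmorph0. Qed.

Lemma ipBr x y z : ip z (x - y) = ip z x - ip z y.
Proof. by rewrite ipC ipBl rmorphB /= -!ipC. Qed.

Lemma ip_suml (I : Type) (r : seq I) (P : pred I) (F : I -> H) z :
  ip (\sum_(i <- r | P i) F i) z = \sum_(i <- r | P i) ip (F i) z.
Proof. by elim/big_rec2: _ => [|i x y _ <-]; rewrite ?ip0l ?ipDl. Qed.

Lemma ip_sumr (I : Type) (r : seq I) (P : pred I) (F : I -> H) z :
  ip z (\sum_(i <- r | P i) F i) = \sum_(i <- r | P i) ip z (F i).
Proof. by elim/big_rec2: _ => [|i x y _ <-]; rewrite ?ip0r ?ipDr. Qed.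

Definition sqnorm x : R := complex.Re (ip x x).

Lemma ip_self x : ip x x = (sqnorm x)%:C.
Proof.
have := ipC x x; rewrite /sqnorm; case: (ip x x) => a b [] /eqP.
by rewrite -subr_eq0 opprK -mulr2n mulrn_eq0 => /eqP->.
Qed.

Lemma sqnorm_ge0 x : 0 <= sqnorm x.
Proof. by case: ip_inner => _ _ + _; apply. Qed.

Lemma sqnorm_eq0 x : sqnorm x = 0 -> x = 0.
Proof. by case: ip_inner => _ _ _ ip_eq0 sx0; apply: ip_eq0; rewrite ip_self sx0. Qed.

Lemma sqnorm0 : sqnorm 0 = 0.
Proof. by rewrite /sqnorm ip0l. Qed.

Lemma hnorm_sqr x : hnorm ip x ^+ 2 = sqnorm x.
Proof. by rewrite sqr_sqrtr ?sqnorm_ge0. Qed.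

Lemma sqnorm_gt0 x : (0 < sqnorm x) = (x != 0).
Proof.
rewrite lt_def sqnorm_ge0 andbT; congr negb.
by apply/eqP/eqP => [/sqnorm_eq0|->]; last exact: sqnorm0.
Qed.

Lemma hnorm_eq0 x : (hnorm ip x == 0) = (x == 0).
Proof.
rewrite sqrtr_eq0 -/(sqnorm x); apply/idP/eqP => [sx_le0|->]; last by rewrite sqnorm0.
by apply: sqnorm_eq0; apply/eqP; rewrite eq_le sx_le0 sqnorm_ge0.
Qed.

Lemma hnorm1 x : sqnorm x = 1 -> hnorm ip x = 1.
Proof. by rewrite /hnorm -/(sqnorm x) => ->; rewrite sqrtr1. Qed.

Lemma hnorm_ltE x (e : R) : 0 < e -> (hnorm ip x < e) = (sqnorm x < e ^+ 2).
Proof.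
by move=> e_gt0; rewrite -[e in LHS]gtr0_norm // -sqrtr_sqr ltr_sqrt ?exprn_gt0.
Qed.

Lemma sqnormN x : sqnorm (- x) = sqnorm x.
Proof. by rewrite /sqnorm ipNl -scaleN1r ipZr rmorphN1 mulN1r opprK. Qed.

Lemma sqnormZ (t : R) x : sqnorm (t%:C *: x) = t ^+ 2 * sqnorm x.
Proof. by rewrite /sqnorm ipZl ipZr ip_self /=; ring. Qed.

Definition normalize x := (hnorm ip x)^-1%:C *: x.

Lemma normalizeK x : (hnorm ip x)%:C *: normalize x = x.
Proof.
rewrite scalerA -rmorphM; have [/eqP|nx0] := eqVneq (hnorm ip x) 0.
  by rewrite hnorm_eq0 => /eqP->; rewrite scaler0.
by rewrite divff // scale1r.
Qed.

Lemma sqnorm_normalize x : x != 0 -> sqnorm (normalize x) = 1.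
Proof.
by move=> x0; rewrite sqnormZ -hnorm_sqr -exprMn mulVf ?expr1n ?hnorm_eq0.
Qed.

Definition subspace (S : H -> Prop) :=
  [/\ S 0, forall x y, S x -> S y -> S (x + y) & forall a x, S x -> S (a *: x)].

Lemma subspace_sum {S : H -> Prop} {I : Type} {r : seq I} {P : pred I} {F : I -> H} :
  subspace S -> (forall i, P i -> S (F i)) -> S (\sum_(i <- r | P i) F i).
Proof. by case=> S0 SD _ SF; elim/big_ind: _. Qed.

(* Gram-Schmidt applied to a linearly dependent family produces zero vectors,
   hence the alternative [e i = 0]. *)
Definition orthonormal0 (n : nat) (e : nat -> H) :=
  (forall i j, (i < n)%N -> (j < n)%N -> i != j -> ip (e i) (e j) = 0) /\
  (forall i, (i < n)%N -> e i = 0 \/ ip (e i) (e i) = 1).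

Lemma orthonormal0S n e :
  orthonormal0 n e -> (forall j, (j < n)%N -> ip (e n) (e j) = 0) ->
  e n = 0 \/ ip (e n) (e n) = 1 -> orthonormal0 n.+1 e.
Proof.
move=> [e_orth e_unit] en_orth en_unit.
have ltnS_split k : (k < n.+1)%N -> k = n \/ (k < n)%N.
  by rewrite ltnS leq_eqVlt => /predU1P[]; [left|right].
split=> [i j /ltnS_split[->|lt_in] /ltnS_split[->|lt_jn]|i /ltnS_split[->|]] //.
- by rewrite eqxx.
- by move=> _; exact: en_orth.
- by move=> _; rewrite ipC en_orth // rmorph0.
- exact: e_orth.
- exact: e_unit.
Qed.

Definition proj (n : nat) (e : nat -> H) f := \sum_(i < n) ip f (e i) *: e i.

Lemma ip_proj n e f : ip f (proj n e f) = (\sum_(i < n) csqabs (ip f (e i)))%:C.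
Proof.
rewrite ip_sumr rmorph_sum; apply: eq_bigr => i _.
by rewrite ipZr mulrC -csqabsE.
Qed.

Lemma subspace_proj_fixed n e : subspace (fun x => proj n e x = x).
Proof.
split=> [|x y px py|a x px].
- by rewrite /proj big1 // => i _; rewrite ip0l scale0r.
- rewrite -[in RHS]px -[in RHS]py /proj -big_split.
  by apply: eq_bigr => i _; rewrite ipDl scalerDl.
- rewrite -[in RHS]px /proj scaler_sumr.
  by apply: eq_bigr => i _; rewrite ipZl scalerA.
Qed.

Lemma ip_proj_orthogonal n e f x :
  (forall i, (i < n)%N -> ip (e i) x = 0) -> ip (proj n e f) x = 0.
Proof. by move=> ex0; rewrite ip_suml big1 // => i _; rewrite ipZl ex0 ?mulr0. Qed.

Section Projection.
Context {n : nat} {e : nat -> H}.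
Hypothesis e_orth : orthonormal0 n e.

Lemma ip_proj_basis f j : (j < n)%N -> ip (proj n e f) (e j) = ip f (e j).
Proof.
case: e_orth => orth unit lt_jn; rewrite ip_suml (bigD1 (Ordinal lt_jn)) //=.
rewrite big1 => [|i ij]; last by rewrite ipZl orth ?mulr0.
by rewrite ipZl addr0; case: (unit j lt_jn) => [->|->]; rewrite ?ip0r ?mulr0 ?mulr1.
Qed.

Lemma ip_sub_proj_basis f j : (j < n)%N -> ip (f - proj n e f) (e j) = 0.
Proof. by move=> lt_jn; rewrite ipBl ip_proj_basis ?subrr. Qed.

Lemma proj_basis i : (i < n)%N -> proj n e (e i) = e i.
Proof.
case: e_orth => orth unit lt_in; rewrite /proj (bigD1 (Ordinal lt_in)) //=.
rewrite big1 => [|j ji]; last by rewrite orth ?scale0r // eq_sym.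
by rewrite addr0; case: (unit i lt_in) => [->|->]; rewrite ?scaler0 ?scale1r.
Qed.

Lemma ip_proj_fixed f x : proj n e x = x -> ip (proj n e f) x = ip f x.
Proof.
move=> <-; apply/eqP; rewrite eq_sym -subr_eq0 -ipBl ip_sumr big1 // => i _.
by rewrite ipZr ip_sub_proj_basis ?mulr0.
Qed.

Lemma proj_fixed_widen m f : (m <= n)%N -> proj n e (proj m e f) = proj m e f.
Proof.
move=> le_mn; apply: (subspace_sum (subspace_proj_fixed n e)) => i _.
have [_ _ SZ] := subspace_proj_fixed n e; apply: SZ; apply: proj_basis.
exact: leq_trans (ltn_ord i) le_mn.
Qed.

Lemma proj_idem f : proj n e (proj n e f) = proj n e f.
Proof. exact: proj_fixed_widen. Qed.

Lemma sqnorm_proj f : sqnorm (proj n e f) = \sum_(i < n) csqabs (ip f (e i)).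
Proof. by rewrite /sqnorm ip_proj_fixed ?proj_idem // ip_proj. Qed.

Lemma sqnorm_sub_proj f :
  sqnorm (f - proj n e f) = sqnorm f - \sum_(i < n) csqabs (ip f (e i)).
Proof.
rewrite {1}/sqnorm ipBr [ip _ (proj n e f)]ipBl ip_proj_fixed ?proj_idem // subrr subr0.
by rewrite ipBl [ip (proj n e f) f]ipC ip_proj conjc_real ip_self.
Qed.

Lemma bessel f : \sum_(i < n) csqabs (ip f (e i)) <= sqnorm f.
Proof. by rewrite -subr_ge0 -sqnorm_sub_proj sqnorm_ge0. Qed.

Lemma sqnorm_proj_split f : sqnorm f = sqnorm (proj n e f) + sqnorm (f - proj n e f).
Proof. by rewrite sqnorm_proj sqnorm_sub_proj addrC subrK. Qed.

Lemma csqabs_ip_le f j : (j < n)%N -> csqabs (ip f (e j)) <= sqnorm f.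
Proof.
move=> lt_jn; apply: le_trans (bessel f); rewrite (bigD1 (Ordinal lt_jn)) //= lerDl.
by rewrite sumr_ge0 // => i _; apply: csqabs_ge0.
Qed.

End Projection.

Section GramSchmidt.
Variable u : nat -> H.

Fixpoint gs_prefix n : nat -> H :=
  if n is m.+1 then
    fun k => if k == m then normalize (u m - proj m (gs_prefix m) (u m)) else gs_prefix m k
  else fun=> 0.

Definition gram_schmidt k := gs_prefix k.+1 k.
Local Notation e := gram_schmidt.

Lemma gs_prefixE n k : (k < n)%N -> gs_prefix n k = e k.
Proof.
elim: n => // n IH; rewrite ltnS leq_eqVlt => /predU1P[->//|lt_kn] /=.
by rewrite (ltn_eqF lt_kn) IH.
Qed.

Lemma gram_schmidtE n : e n = normalize (u n - proj n e (u n)).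
Proof.
rewrite /e /= eqxx; congr (normalize (_ - _)).
by apply: eq_bigr => i _; rewrite gs_prefixE.
Qed.

Lemma gram_schmidt_orthonormal n : orthonormal0 n e.
Proof.
elim: n => [|n IH]; first by split.
apply: orthonormal0S => // [j lt_jn|].
  by rewrite gram_schmidtE ipZl (ip_sub_proj_basis IH) ?mulr0.
rewrite gram_schmidtE; have [->|r0] := eqVneq (u n - proj n e (u n)) 0.
  by left; rewrite /normalize scaler0.
by right; rewrite ip_self sqnorm_normalize.
Qed.

Lemma gram_schmidt_span n : proj n.+1 e (u n) = u n.
Proof.
have [e_orth e_unit] := gram_schmidt_orthonormal n.+1.
set r := u n - proj n e (u n).
have r_e : r = (hnorm ip r)%:C *: e n by rewrite gram_schmidtE normalizeK.
have ip_u_e : ip (u n) (e n) = ip r (e n).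
  rewrite ipBl ip_proj_orthogonal ?subr0 // => i lt_in.
  by rewrite e_orth ?(ltn_eqF lt_in) ?ltnS ?(ltnW lt_in).
rewrite /proj big_ord_recr /= -/(proj n e (u n)) ip_u_e.
suff -> : ip r (e n) *: e n = r by rewrite addrC subrK.
rewrite [in ip r _]r_e ipZl -scalerA [RHS]r_e; congr (_ *: _).
by case: (e_unit n (ltnSn n)) => ->; rewrite ?scaler0 ?scale1r.
Qed.

Lemma gram_schmidt_subspace S : subspace S -> (forall k, S (u k)) -> forall n, S (e n).
Proof.
move=> Ssub Su; have [_ SD SZ] := Ssub; elim/ltn_ind => n IH.
rewrite gram_schmidtE; apply: (SZ); apply: SD (Su n) _; rewrite -scaleN1r; apply: (SZ).
by apply: (subspace_sum Ssub) => i _; apply: (SZ); apply: IH.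
Qed.

End GramSchmidt.

Definition excess (N : nat) (v w : nat -> H) f :=
  \sum_(j < N) (csqabs (ip f (w j)) - csqabs (ip f (v j))).

Lemma PhiE N v w f : Phi ip N v w f = excess N v w f + 1.
Proof. by []. Qed.

Section Parseval.
Hypothesis H_complete : is_complete ip.
Context {v : nat -> H}.
Hypothesis v_ONB : is_ONB ip v.

Lemma ONB_orthonormal0 n : orthonormal0 n v.
Proof.
case: v_ONB => v_orth _; split=> [i j _ _ /negbTE ij|i _]; first by rewrite v_orth ij.
by right; rewrite v_orth eqxx.
Qed.

Lemma ONB_sqnorm j : sqnorm (v j) = 1.
Proof. by case: v_ONB => v_orth _; rewrite /sqnorm v_orth eqxx. Qed.

Definition bessel_sum f n := \sum_(i < n) csqabs (ip f (v i)).

Lemma sqnorm_proj_ONB_sub f m n : (n <= m)%N ->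
  sqnorm (proj m v f - proj n v f) = bessel_sum f m - bessel_sum f n.
Proof.
move=> le_nm; set g := proj m v f.
have ip_gv i : (i < n)%N -> ip g (v i) = ip f (v i).
  by move=> lt_in; rewrite (ip_proj_basis (ONB_orthonormal0 m)) // (leq_trans lt_in).
have -> : proj n v f = proj n v g by apply: eq_bigr => i _; rewrite ip_gv.
rewrite (sqnorm_sub_proj (ONB_orthonormal0 n)) (sqnorm_proj (ONB_orthonormal0 m)).
by congr (_ - _); apply: eq_bigr => i _; rewrite ip_gv.
Qed.

Lemma bessel_sum_nondecreasing f : nondecreasing_seq (bessel_sum f).
Proof. by move=> n m le_nm; rewrite -subr_ge0 -sqnorm_proj_ONB_sub // sqnorm_ge0. Qed.

Lemma proj_ONB_cauchy f e : 0 < e ->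
  exists M, forall m n, (M <= m)%N -> (M <= n)%N -> hnorm ip (proj m v f - proj n v f) < e.
Proof.
move=> e_gt0; pose s := sup (range (bessel_sum f)).
have s_sup : has_sup (range (bessel_sum f)).
  split; first by exists (bessel_sum f 0), 0%N.
  by exists (sqnorm f) => _ [n _ <-]; apply: bessel (ONB_orthonormal0 n) f.
have le_s n : bessel_sum f n <= s by apply: (ub_le_sup s_sup.2); exists n.
have [_ [M _ <-] lt_sM] := sup_adherent (exprn_gt0 2 e_gt0) s_sup.
exists M; suff key m n : (M <= n <= m)%N -> sqnorm (proj m v f - proj n v f) < e ^+ 2.
  move=> m n leMm leMn; rewrite hnorm_ltE //; have [le_nm|/ltnW le_mn] := leqP n m.
    by apply: key; rewrite leMn.
  by rewrite -sqnormN opprB key ?leMm.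
case/andP => leMn le_nm; rewrite sqnorm_proj_ONB_sub //.
have := bessel_sum_nondecreasing f _ _ leMn; have := le_s m; rewrite -/s in lt_sM; lra.
Qed.

Lemma proj_ONB_lim f l :
  (forall e, 0 < e -> exists M, forall n, (M <= n)%N -> hnorm ip (proj n v f - l) < e) ->
  l = f.
Proof.
move=> proj_l; apply/esym/subr0_eq; case: v_ONB => _; apply => k.
apply: csqabs_eq0; apply/eqP; rewrite eq_le csqabs_ge0 andbT.
apply/ler_addgt0Pr => e e_gt0; rewrite add0r.
have sqrt_e_gt0 : 0 < Num.sqrt e by rewrite sqrtr_gt0.
have [M ltM] := proj_l _ sqrt_e_gt0.
have lt_kn : (k < maxn M k.+1)%N by rewrite leq_max ltnSn orbT.
have -> : f - l = (f - proj (maxn M k.+1) v f) + (proj (maxn M k.+1) v f - l).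
  by rewrite addrA subrK.
rewrite ipDl (ip_sub_proj_basis (ONB_orthonormal0 _)) // add0r.
apply: le_trans (csqabs_ip_le (ONB_orthonormal0 _) _ _ lt_kn) _.
by apply/ltW; rewrite -(sqr_sqrtr (ltW e_gt0)) -hnorm_ltE ?sqrtr_gt0 // ltM ?leq_maxl.
Qed.

Lemma bessel_sum_cvg f : (bessel_sum f n @[n --> \oo] --> sqnorm f)%classic.
Proof.
have [l proj_l] := H_complete _ (proj_ONB_cauchy f).
have l_f := proj_ONB_lim _ _ proj_l; subst l.
apply/cvgrPdist_lt => e e_gt0.
have sqrt_e_gt0 : 0 < Num.sqrt e by rewrite sqrtr_gt0.
have [M ltM] := proj_l _ sqrt_e_gt0.
near=> n; rewrite /bessel_sum -(sqnorm_sub_proj (ONB_orthonormal0 n)).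
rewrite ger0_norm ?sqnorm_ge0 // -sqnormN opprB.
rewrite -(sqr_sqrtr (ltW e_gt0)) -hnorm_ltE ?sqrtr_gt0 // ltM //.
by near: n; exists M.
Unshelve. all: by end_near. Qed.

Lemma parseval f : frame_sum ip v f = (sqnorm f)%:E.
Proof.
rewrite /frame_sum.
have -> : (fun n => (\sum_(0 <= j < n) (csqabs (ip f (v j)))%:E)%E) = EFin \o bessel_sum f.
  by apply: funext => n /=; rewrite sumEFin big_mkord.
rewrite EFin_lim; last by apply/cvg_ex; exists (sqnorm f); apply: bessel_sum_cvg.
by rewrite (cvg_lim _ (bessel_sum_cvg f)).
Qed.

Lemma frame_sum_BN N w f : frame_sum ip (BN N v w) f = (sqnorm f + excess N v w f)%:E.
Proof.
have csqabs_ge0E (u : nat -> H) k : (0 <= (csqabs (ip f (u k)))%:E)%E.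
  by rewrite lee_fin csqabs_ge0.
rewrite /frame_sum (nneseries_split _ N) //.
have := parseval f; rewrite /frame_sum (nneseries_split _ N) //.
have -> : (\sum_(0 + N <= k <oo) (csqabs (ip f (BN N v w k)))%:E)%E =
          (\sum_(0 + N <= k <oo) (csqabs (ip f (v k)))%:E)%E.
  apply: congr_lim; apply: funext => n; apply: eq_big_nat => k /andP[le_Nk _].
  by rewrite /BN ltnNge le_Nk.
set tail := (\sum_(0 + N <= k <oo) _)%E; rewrite !sumEFin add0n !big_mkord.
have -> : \sum_(i < N) csqabs (ip f (BN N v w i)) = \sum_(i < N) csqabs (ip f (w i)).
  by apply: eq_bigr => i _; rewrite /BN ltn_ord.
case: tail => [t| |] //= [<-]; rewrite /excess sumrB; congr (_%:E); ring.
Qed.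

End Parseval.

Lemma excess0 N v w : excess N v w 0 = 0.
Proof. by rewrite /excess big1 // => j _; rewrite !ip0l subrr. Qed.

Lemma excessZ N v w (t : R) f : excess N v w (t%:C *: f) = t ^+ 2 * excess N v w f.
Proof. by rewrite mulr_sumr; apply: eq_bigr => j _; rewrite !ipZl !csqabsZ mulrBr. Qed.

Lemma excess_normalize N v w f : excess N v w f = sqnorm f * excess N v w (normalize f).
Proof.
have [->|f0] := eqVneq f 0; first by rewrite sqnorm0 mul0r excess0.
by rewrite excessZ mulrA -hnorm_sqr -exprMn mulfV ?expr1n ?mul1r ?hnorm_eq0.
Qed.

(* Gram-Schmidt applied to [v 0, ..., v (N-1), w 0, ..., w (N-1)], padded with zeros: its
   nonzero vectors form an orthonormal basis of [in_HN N v w]. *)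
Definition HN_basis (N : nat) (v w : nat -> H) :=
  gram_schmidt (nth 0 (mkseq v N ++ mkseq w N)).

Section FiniteSpan.
Context {N : nat} {v w : nat -> H}.
Hypotheses (v_unit : forall j, sqnorm (v j) = 1) (w_unit : forall j, sqnorm (w j) = 1).
Hypothesis N_gt0 : (0 < N)%N.
Local Notation HN := (in_HN N v w).
Local Notation SH := (in_SH_HN ip N v w).
Local Notation M := (N + N)%N.
Local Notation Phi := (Phi ip N v w).

Lemma subspace_in_HN : subspace HN.
Proof.
split=> [|x y [a [b ->]] [a' [b' ->]]|c x [a [b ->]]].
- by exists (fun=> 0), (fun=> 0); rewrite big1 // => j _; rewrite !scale0r addr0.
- exists (fun j => a j + a' j), (fun j => b j + b' j); rewrite -big_split.
  by apply: eq_bigr => j _; rewrite !scalerDl addrACA.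
- exists (fun j => c * a j), (fun j => c * b j); rewrite scaler_sumr.
  by apply: eq_bigr => j _; rewrite scalerDr !scalerA.
Qed.

Lemma in_HN_ind {S : H -> Prop} : subspace S ->
  (forall j, (j < N)%N -> S (v j) /\ S (w j)) -> forall f, HN f -> S f.
Proof.
move=> Ssub Svw f [a [b ->]]; apply: (subspace_sum Ssub) => j _.
have [_ SD SZ] := Ssub; have [Svj Swj] := Svw j (ltn_ord j).
exact: SD (SZ _ _ Svj) (SZ _ _ Swj).
Qed.

Lemma in_HN_v j : (j < N)%N -> HN (v j).
Proof.
move=> lt_jN; exists (fun i => (i == j)%:R), (fun=> 0).
rewrite (bigD1 (Ordinal lt_jN)) //= eqxx scale1r scale0r addr0 big1 ?addr0 // => i ij.
by rewrite (negbTE (ij : (i : nat) != j)) !scale0r addr0.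
Qed.

Lemma in_HN_w j : (j < N)%N -> HN (w j).
Proof.
move=> lt_jN; exists (fun=> 0), (fun i => (i == j)%:R).
rewrite (bigD1 (Ordinal lt_jN)) //= eqxx scale1r scale0r add0r big1 ?addr0 // => i ij.
by rewrite (negbTE (ij : (i : nat) != j)) !scale0r addr0.
Qed.

Local Notation spanning := (nth 0 (mkseq v N ++ mkseq w N)).

Lemma spanning_v j : (j < N)%N -> spanning j = v j.
Proof. by move=> lt_jN; rewrite nth_cat size_mkseq lt_jN nth_mkseq. Qed.

Lemma spanning_w j : (j < N)%N -> spanning (N + j) = w j.
Proof. by move=> lt_jN; rewrite nth_cat size_mkseq ltnNge leq_addr /= addKn nth_mkseq. Qed.

Lemma in_HN_spanning k : HN (spanning k).
Proof.
rewrite nth_cat size_mkseq; case: ltnP => [lt_kN|le_Nk].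
  by rewrite nth_mkseq //; apply: in_HN_v.
have [lt_kN'|le_Nk'] := ltnP (k - N) N; first by rewrite nth_mkseq //; apply: in_HN_w.
by rewrite nth_default ?size_mkseq //; case: subspace_in_HN.
Qed.

Local Notation HN_basis := (HN_basis N v w).

Lemma HN_basis_orthonormal : orthonormal0 M HN_basis.
Proof. exact: gram_schmidt_orthonormal. Qed.

Lemma in_HN_basis i : HN (HN_basis i).
Proof. exact: gram_schmidt_subspace subspace_in_HN in_HN_spanning i. Qed.

Lemma proj_HN_fixed f : HN f -> proj M HN_basis f = f.
Proof.
have fixed k : (k < M)%N -> proj M HN_basis (spanning k) = spanning k.
  move=> lt_kM; rewrite -[in RHS](gram_schmidt_span spanning k).
  by rewrite -[in LHS](gram_schmidt_span spanning k) (proj_fixed_widen HN_basis_orthonormal).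
have fixed_vw j : (j < N)%N ->
    proj M HN_basis (v j) = v j /\ proj M HN_basis (w j) = w j.
  move=> lt_jN; rewrite -spanning_v // -spanning_w //.
  by rewrite !fixed ?ltn_add2l // (leq_trans lt_jN) ?leq_addr.
exact: (in_HN_ind (subspace_proj_fixed M HN_basis) fixed_vw).
Qed.

Lemma proj_in_HN f : HN (proj M HN_basis f).
Proof.
apply: (subspace_sum subspace_in_HN) => i _.
by case: subspace_in_HN => _ _; apply; apply: in_HN_basis.
Qed.

Lemma sqnorm_HN f : HN f -> \sum_(i < M) csqabs (ip f (HN_basis i)) = sqnorm f.
Proof. by move=> HNf; rewrite -(sqnorm_proj HN_basis_orthonormal) proj_HN_fixed. Qed.

Lemma excess_proj_HN f : excess N v w (proj M HN_basis f) = excess N v w f.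
Proof.
apply: eq_bigr => j _.
rewrite !(ip_proj_fixed HN_basis_orthonormal) //; apply: proj_HN_fixed.
  exact: in_HN_v.
exact: in_HN_w.
Qed.

Lemma sum_excess_HN_basis : \sum_(i < M | HN_basis i != 0) excess N v w (HN_basis i) = 0.
Proof.
rewrite big_mkcond /= (eq_bigr (fun i : 'I_M => excess N v w (HN_basis i))) => [|i _]; last first.
  by have [->|_] := eqVneq (HN_basis i) 0; rewrite ?eqxx ?excess0.
rewrite exchange_big big1 //= => j _; rewrite sumrB.
have sum_csqabs x : HN x -> \sum_(i < M) csqabs (ip (HN_basis i) x) = sqnorm x.
  by move=> HNx; rewrite -(sqnorm_HN _ HNx); apply: eq_bigr => i _; rewrite ipC csqabs_conjc.
by rewrite !sum_csqabs ?v_unit ?w_unit ?subrr //; [apply: in_HN_v | apply: in_HN_w].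
Qed.

Lemma HN_basis_neq0 : exists i : 'I_M, HN_basis i != 0.
Proof.
apply/existsP; apply: contraTT isT => /existsPn basis0.
have : v 0%N = 0.
  rewrite -(proj_HN_fixed _ (in_HN_v _ N_gt0)) /proj big1 // => i _.
  by move/negPn/eqP: (basis0 i) => ->; rewrite scaler0.
by move/(congr1 sqnorm); rewrite v_unit sqnorm0 => /eqP; rewrite oner_eq0.
Qed.

Lemma sqnorm_SH f : SH f -> sqnorm f = 1.
Proof. by case=> n1 _; rewrite -hnorm_sqr n1 expr1n. Qed.

Lemma SH_HN_basis (i : 'I_M) : HN_basis i != 0 -> SH (HN_basis i).
Proof.
move=> ei0; split; last exact: in_HN_basis.
have [_ /(_ i (ltn_ord i))[ei0'|ei1]] := HN_basis_orthonormal.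
  by rewrite ei0' eqxx in ei0.
by apply: hnorm1; rewrite /sqnorm ei1.
Qed.

Lemma SH_normalize f : HN f -> f != 0 -> SH (normalize f).
Proof.
move=> HNf f0; split; first by apply: hnorm1; apply: sqnorm_normalize.
by case: subspace_in_HN => _ _; apply.
Qed.

Lemma Phi_min_le1 fmin : (forall f, SH f -> Phi fmin <= Phi f) -> Phi fmin <= 1.
Proof.
move=> fmin_min; have [i ei0 le0] := sumr_eq0_exists_le0 sum_excess_HN_basis HN_basis_neq0.
by apply: le_trans (fmin_min _ (SH_HN_basis _ ei0)) _; rewrite PhiE gerDr.
Qed.

Lemma Phi_max_ge1 fmax : (forall f, SH f -> Phi f <= Phi fmax) -> 1 <= Phi fmax.
Proof.
move=> fmax_max; have [i ei0 ge0] := sumr_eq0_exists_ge0 sum_excess_HN_basis HN_basis_neq0.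
by apply: le_trans (fmax_max _ (SH_HN_basis _ ei0)); rewrite PhiE lerDr.
Qed.

Lemma excess_HN_ge m : (forall f, SH f -> m <= excess N v w f) ->
  forall f, HN f -> m * sqnorm f <= excess N v w f.
Proof.
move=> m_le f HNf; have [->|f0] := eqVneq f 0; first by rewrite sqnorm0 excess0 mulr0.
rewrite excess_normalize mulrC ler_pM2l ?sqnorm_gt0 //.
exact/m_le/SH_normalize.
Qed.

Lemma excess_HN_le m : (forall f, SH f -> excess N v w f <= m) ->
  forall f, HN f -> excess N v w f <= m * sqnorm f.
Proof.
move=> le_m f HNf; have [->|f0] := eqVneq f 0; first by rewrite sqnorm0 excess0 mulr0.
rewrite excess_normalize [X in _ <= X]mulrC ler_pM2l ?sqnorm_gt0 //.
exact/le_m/SH_normalize.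
Qed.

(* Real coordinates on H_N: its unit sphere is the image under [vec] of the compact set
   [coord_sphere]. *)
Definition vec (c : 'rV[R]_(M + M)) : H :=
  \sum_(i < M) (c ord0 (lshift M i) +i* c ord0 (rshift M i)) *: HN_basis i.

Definition coords f : 'rV[R]_(M + M) :=
  row_mx (\row_i complex.Re (ip f (HN_basis i))) (\row_i complex.Im (ip f (HN_basis i))).

Lemma vec_coords f : HN f -> vec (coords f) = f.
Proof.
move=> HNf; rewrite -[RHS](proj_HN_fixed _ HNf); apply: eq_bigr => i _.
by rewrite row_mxEl row_mxEr !mxE; case: (ip f (HN_basis i)).
Qed.

Lemma in_HN_vec c : HN (vec c).
Proof.
apply: (subspace_sum subspace_in_HN) => i _.
by case: subspace_in_HN => _ _; apply; apply: in_HN_basis.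
Qed.

Lemma continuous_csqabs_ip_vec x : continuous (fun c => csqabs (ip (vec c) x)).
Proof.
have coordM k (r : R) : continuous (fun c : 'rV[R]_(M + M) => c ord0 k * r).
  by move=> c; apply: continuousM; [apply: coord_continuous | apply: cst_continuous].
have cont_form (a b : 'I_M -> R) : continuous (fun c : 'rV[R]_(M + M) =>
    \sum_(i < M) (c ord0 (lshift M i) * a i - c ord0 (rshift M i) * b i)).
  apply: continuous_big => [|i _ c]; first exact: add_continuous.
  exact: continuousB (coordM _ _ c) (coordM _ _ c).
pose a i := ip (HN_basis i) x.
have ReE c : complex.Re (ip (vec c) x) = \sum_(i < M)
    (c ord0 (lshift M i) * complex.Re (a i) - c ord0 (rshift M i) * complex.Im (a i)).
  rewrite ip_suml (@raddf_sum _ _ (@complex.Re R : Rcomplex R -> R)).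
  by apply: eq_bigr => i _; rewrite ipZl /a; case: (ip _ x) => ? ?.
have ImE c : complex.Im (ip (vec c) x) = \sum_(i < M)
    (c ord0 (lshift M i) * complex.Im (a i) - c ord0 (rshift M i) * - complex.Re (a i)).
  rewrite ip_suml (@raddf_sum _ _ (@complex.Im R : Rcomplex R -> R)).
  by apply: eq_bigr => i _; rewrite ipZl /a; case: (ip _ x) => ? ? /=; ring.
move=> c; rewrite /csqabs.
under eq_fun do rewrite ReE ImE.
have cRe := cont_form (fun i => complex.Re (a i)) (fun i => complex.Im (a i)) c.
have cIm := cont_form (fun i => complex.Im (a i)) (fun i => - complex.Re (a i)) c.
exact: continuousD (continuousM cRe cRe) (continuousM cIm cIm).
Qed.

Lemma continuous_excess_vec : continuous (fun c => excess N v w (vec c)).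
Proof.
rewrite /excess; apply: continuous_big => [|j _ c]; first exact: add_continuous.
exact: continuousB (continuous_csqabs_ip_vec _ c) (continuous_csqabs_ip_vec _ c).
Qed.

Lemma continuous_sqnorm_vec : continuous (fun c => sqnorm (vec c)).
Proof.
under eq_fun do rewrite -(sqnorm_HN _ (in_HN_vec _)).
apply: continuous_big => [|i _]; first exact: add_continuous.
exact: continuous_csqabs_ip_vec.
Qed.

Definition coord_sphere : set 'rV[R]_(M + M) :=
  ([set c : 'rV[R]_(M + M) | forall k, `[-1, 1]%classic (c ord0 k)] `&`
   [set c | sqnorm (vec c) = 1])%classic.

Lemma compact_coord_sphere : compact coord_sphere.
Proof.
have box := @rV_compact R (M + M) (fun=> `[-1 : R, 1]%classic)
  (fun=> @segment_compact R (-1) 1).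
exact: compact_closedI box ((continuous_closedP _).1 continuous_sqnorm_vec _ (@closed_eq R 1)).
Qed.

Lemma coords_in_sphere f : SH f -> coord_sphere (coords f).
Proof.
move=> SHf; split; last by rewrite /= vec_coords ?sqnorm_SH //; case: SHf.
move=> k; rewrite -(splitK k); case: (fintype.split k) => i /=;
  rewrite ?row_mxEl ?row_mxEr mxE /= in_itv /=;
  have := csqabs_ip_le HN_basis_orthonormal f _ (ltn_ord i); rewrite sqnorm_SH //;
  case: (ip f (HN_basis i)) => a b; rewrite /csqabs /= => le1; apply/andP; split; nra.
Qed.

Lemma Phi_extrema : exists fmin fmax, [/\ SH fmin, SH fmax &
  forall f, SH f -> Phi fmin <= Phi f <= Phi fmax].
Proof.
have [i0 ei0] := HN_basis_neq0.
have sphere0 : (coord_sphere !=set0)%classic.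
  by exists (coords (HN_basis i0)); apply/coords_in_sphere/SH_HN_basis.
have cont := @continuous_subspaceT _ _ coord_sphere _ continuous_excess_vec.
have [cmin + min_cmin] := EVT_min_rV sphere0 compact_coord_sphere cont.
have [cmax + max_cmax] := EVT_max_rV sphere0 compact_coord_sphere cont.
rewrite !inE => -[_ /hnorm1 cmax1] [_ /hnorm1 cmin1].
exists (vec cmin), (vec cmax); split; try by split=> //; apply: in_HN_vec.
move=> f SHf; rewrite !PhiE !lerD2r -(vec_coords _ SHf.2).
by apply/andP; split; [apply: min_cmin | apply: max_cmax]; rewrite inE; apply: coords_in_sphere.
Qed.

End FiniteSpan.

Section FrameBoundsBN.
Hypothesis H_complete : is_complete ip.
Context {N : nat} {v w : nat -> H}.
Hypotheses (v_ONB : is_ONB ip v) (w_unit : forall j, sqnorm (w j) = 1) (N_gt0 : (0 < N)%N).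
Local Notation SH := (in_SH_HN ip N v w).
Local Notation Phi := (Phi ip N v w).

Lemma lower_frame_bound_BNP fmin : SH fmin -> (forall f, SH f -> Phi fmin <= Phi f) ->
  forall A, lower_frame_bound ip (BN N v w) A <-> A <= Phi fmin.
Proof.
move=> SHmin fmin_min A; split=> [lowA|le_A f].
  move: (lowA fmin); rewrite frame_sum_BN // hnorm_sqr (sqnorm_SH _ SHmin).
  by rewrite mulr1 lee_fin PhiE addrC.
rewrite frame_sum_BN // hnorm_sqr lee_fin.
(* excess f = excess (P f) >= m ||P f||^2 >= m ||f||^2, with P the projection onto H_N
   and m := excess fmin <= 0. *)
have m_le0 : excess N v w fmin <= 0.
  by have := Phi_min_le1 (ONB_sqnorm v_ONB) w_unit N_gt0 _ fmin_min; rewrite PhiE; lra.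
have min_le g : SH g -> excess N v w fmin <= excess N v w g.
  by move=> SHg; rewrite -(lerD2r 1) -!PhiE fmin_min.
have := excess_HN_ge _ min_le _ (proj_in_HN f); rewrite excess_proj_HN.
have := sqnorm_proj_split (@HN_basis_orthonormal N v w) f.
have := mulr_le0_ge0 m_le0 (sqnorm_ge0 (f - proj (N + N) (HN_basis N v w) f)).
have : A * sqnorm f <= (excess N v w fmin + 1) * sqnorm f by rewrite ler_wpM2r ?sqnorm_ge0.
nra.
Qed.

Lemma upper_frame_bound_BNP fmax : SH fmax -> (forall f, SH f -> Phi f <= Phi fmax) ->
  forall B, upper_frame_bound ip (BN N v w) B <-> Phi fmax <= B.
Proof.
move=> SHmax fmax_max B; split=> [upB|le_B f].
  move: (upB fmax); rewrite frame_sum_BN // hnorm_sqr (sqnorm_SH _ SHmax).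
  by rewrite mulr1 lee_fin PhiE addrC.
rewrite frame_sum_BN // hnorm_sqr lee_fin.
have m_ge0 : 0 <= excess N v w fmax.
  by have := Phi_max_ge1 (ONB_sqnorm v_ONB) w_unit N_gt0 _ fmax_max; rewrite PhiE; lra.
have le_max g : SH g -> excess N v w g <= excess N v w fmax.
  by move=> SHg; rewrite -(lerD2r 1) -!PhiE fmax_max.
have := excess_HN_le _ le_max _ (proj_in_HN f); rewrite excess_proj_HN.
have := sqnorm_proj_split (@HN_basis_orthonormal N v w) f.
have := mulr_ge0 m_ge0 (sqnorm_ge0 (f - proj (N + N) (HN_basis N v w) f)).
have : (excess N v w fmax + 1) * sqnorm f <= B * sqnorm f by rewrite ler_wpM2r ?sqnorm_ge0.
nra.
Qed.

End FrameBoundsBN.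

End InnerProduct.

Theorem mainTheorem3 (R : realType) (H : lmodType (CC R)) (ip : H -> H -> CC R)
  (v w : nat -> H) (N : nat) :
  is_hilbert ip ->
  is_ONB ip v ->
  (forall j, hnorm ip (w j) = 1) ->
  (1 <= N)%N ->
  (is_frame ip (BN N v w) <->
     (forall f, in_SH_HN ip N v w f -> 0 < Phi ip N v w f)) /\
  (is_frame ip (BN N v w) ->
     exists fmin fmax : H,
       [/\ in_SH_HN ip N v w fmin, in_SH_HN ip N v w fmax,
           (forall f, in_SH_HN ip N v w f ->
              Phi ip N v w fmin <= Phi ip N v w f <= Phi ip N v w fmax),
           optimal_lower_bound ip (BN N v w) (Phi ip N v w fmin) &
           optimal_upper_bound ip (BN N v w) (Phi ip N v w fmax)]).
Proof.
move=> [ip_inner H_complete] v_ONB w_hnorm N_gt0.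
have w_unit j : sqnorm ip (w j) = 1 by rewrite -(hnorm_sqr ip ip_inner) w_hnorm expr1n.
have [fmin [fmax [SHmin SHmax Phi_bounds]]] :=
  Phi_extrema ip ip_inner (w := w) (ONB_sqnorm ip v_ONB) N_gt0.
have lowerP := lower_frame_bound_BNP ip ip_inner H_complete v_ONB w_unit N_gt0 _ SHmin
  (fun f SHf => proj1 (andP (Phi_bounds f SHf))).
have upperP := upper_frame_bound_BNP ip ip_inner H_complete v_ONB w_unit N_gt0 _ SHmax
  (fun f SHf => proj2 (andP (Phi_bounds f SHf))).
have frame_Phi : is_frame ip (BN N v w) <-> 0 < Phi ip N v w fmin.
  split=> [[A [B [A_gt0 _ /(lowerP _) le_A _]]]|Phi_gt0]; first exact: lt_le_trans le_A.
  exists (Phi ip N v w fmin), (Phi ip N v w fmax); split=> //.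
  - by have /andP[] := Phi_bounds _ SHmax.
  - exact/lowerP.
  - exact/upperP.
split.
  rewrite frame_Phi; split=> [Phi_gt0 f SHf|]; last exact.
  by apply: lt_le_trans Phi_gt0 _; have /andP[] := Phi_bounds _ SHf.
move=> _; exists fmin, fmax; split=> //.
  by split=> [|A /(lowerP _)]; first exact/lowerP.
by split=> [|B /(upperP _)]; first exact/upperP.
Qed.
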